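(* Assume (MA1), (MA2), (MA5) and (MA6) hold and let the sequences be generated by Algorithm R2N. If the algorithm generates only finitely many successful iterations, then there is $x^*\in\mathbb{R}^n$ with $x_k=x^*$ for all sufficiently large $k$, and $x^*$ is first-order stationary, i.e. $0\in\nabla f(x^* )+\partial h(x^* )$.
   Context: Setting: $f:\mathbb{R}^n\to\mathbb{R}$ continuously differentiable, $h:\mathbb{R}^n\to\mathbb{R}\cup\{+\infty\}$ proper lower semicontinuous; $\partial$ = limiting subdifferential; $\|\cdot\|$ Euclidean norm on vectors, spectral norm on matrices. A function $g$ is prox-bounded if there exist $\nu>0$, $x$ with $\inf_y g(y)+\frac1{2\nu}\|y-x\|^2>-\infty$; its threshold is the supremum of such $\nu$. For each $x$, $B(x)$ is symmetric and $\psi(\cdot;x):\mathbb{R}^n\to\mathbb{R}\cup\{+\infty\}$. $\varphi(s;x)=f(x)+\nabla f(x)^Ts+\tfrac12s^TB(x)s$, $m(s;x,\sigma)=\varphi(s;x)+\tfrac12\sigma\|s\|^2+\psi(s;x)$; $\varphi_{cp}(s;x)=f(x)+\nabla f(x)^Ts$, $m_{cp}(s;x,\nu^{-1})=\varphi_{cp}(s;x)+\tfrac12\nu^{-1}\|s\|^2+\psi(s;x)$, $P_{cp}(x,\nu^{-1})=\operatorname{argmin}_s m_{cp}(s;x,\nu^{-1})$, and for $s_{cp}\in P_{cp}(x,\nu^{-1})$, $\xi_{cp}(x,\nu^{-1})=f(x)+h(x)-(\varphi_{cp}(s_{cp};x)+\psi(s_{cp};x))$. (MA1): for every $x$, $\psi(\cdot;x)$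 is proper, lsc, prox-bounded with threshold $\lambda_x$, $\psi(0;x)=h(x)$, $\partial\psi(0;x)=\partial h(x)$. (MA2): there is $\lambda\in(0,+\infty]$ with $\lambda_x\ge\lambda$ for all $x$ (convention $1/\infty=0$). (MA5): there is $\kappa_m>0$ such that for all $k$, $|(f+h)(x_k+s_k)-(\varphi(s_k;x_k)+\psi(s_k;x_k))|\le\kappa_m(1+\|B_k\|)\|s_k\|^2$. (MA6): there are $\mu>0$ and $0\le p\le1$ such that $\|B_k\|\le\mu(1+|\mathcal S_k|^p)$ for all $k\in\mathbb N$ (equivalently $\max_{0\le j\le k}\|B_j\|\le\mu(1+|\mathcal S_k|^p)$ for all $k$). Algorithm R2N: constants $0<\theta_1<1<\theta_2$, $0<\eta_1\le\eta_2<1$, $0<\gamma_3\le1<\gamma_1\le\gamma_2$; $x_0$ with $h(x_0)<\infty$, $\sigma_0>0$. For $k=0,1,\dots$: choose symmetric $B_k=B(x_k)$; set $\nu_k=\theta_1/(\|B_k\|+\sigma_k)$; compute $s_{k,cp}\in P_{cp}(x_k,\nu_k^{-1})$ and $\xi_{cp}(x_k,\nu_k^{-1})$ (using $s_{k,cp}$); compute $s_k$ with $m(s_k;x_k,\sigma_k)\le m(s_{k,cp};x_k,\sigma_k)$; if $\|s_k\|>\theta_2\|s_{k,cp}\|$, reset $s_k=s_{k,cp}$; compute $\rho_k=\frac{(f+h)(x_k)-(f+h)(x_k+s_k)}{\varphi(0;x_k)+\psi(0;x_k)-\varphi(s_k;x_k)-\psi(s_k;x_k)}$ (extended arithmetic: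 $\pm\infty\cdot0=0$, $(\pm\infty)/(\pm\infty)=0$); if $\rho_k\ge\eta_1$ set $x_{k+1}=x_k+s_k$, else $x_{k+1}=x_k$; choose $\sigma_{k+1}\in[\gamma_3\sigma_k,\sigma_k]$ if $\rho_k\ge\eta_2$ (very successful), $\sigma_{k+1}\in[\sigma_k,\gamma_1\sigma_k]$ if $\eta_1\le\rho_k<\eta_2$, $\sigma_{k+1}\in[\gamma_1\sigma_k,\gamma_2\sigma_k]$ if $\rho_k<\eta_1$ (unsuccessful). $\mathcal S=\{k:\rho_k\ge\eta_1\}$ (successful iterations), $\mathcal S_k=\{i\in\mathcal S:i\le k\}$, $\mathcal U=\mathbb N\setminus\mathcal S$, $\mathcal U_k=\{i\in\mathcal U:i\le k\}$. *)

(* R : realType, vectors of R^n are column vectors 'cV[R]_n,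
   functions into R ∪ {+oo} are modelled as functions into \bar R that never take -oo. *)
From HB Require Import structures.
From mathcomp Require Import all_boot all_order all_algebra.
From mathcomp Require Import all_classical all_reals all_analysis.
Set Implicit Arguments. Unset Strict Implicit. Unset Printing Implicit Defensive.
Import Order.TTheory GRing.Theory Num.Theory.
Local Open Scope ring_scope.
Local Open Scope classical_set_scope.

Section Defs.
Variables (R : realType) (n : nat).
Local Notation vec := 'cV[R]_n.

Definition dotv (u v : vec) : R := \sum_(i < n) u i ord0 * v i ord0.
Definition enorm (u : vec) : R := Num.sqrt (dotv u u).

Definition opnorm (B : 'M[R]_n) : R :=
  sup [set enorm (B *m s) | s in [set s : vec | enorm s <= 1]].

Definition cvg_vec (u : nat -> vec) (l : vec) : Prop :=
  forall eps : R, 0 < eps -> exists N : nat, forall k, (N <= k)%N -> enorm (u k - l) < eps.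

Definition is_gradient (f : vec -> R) (grad : vec -> vec) : Prop :=
  forall x (eps : R), 0 < eps -> exists2 d : R, 0 < d &
    forall y, enorm (y - x) < d -> `|f y - f x - dotv (grad x) (y - x)| <= eps * enorm (y - x).
Definition continuous_vec (g : vec -> vec) : Prop :=
  forall x (eps : R), 0 < eps -> exists2 d : R, 0 < d &
    forall y, enorm (y - x) < d -> enorm (g y - g x) < eps.
Definition C1_with_gradient (f : vec -> R) (grad : vec -> vec) : Prop :=
  is_gradient f grad /\ continuous_vec grad.

Definition proper_fun (g : vec -> \bar R) : Prop :=
  (exists x, (g x < +oo)%E) /\ (forall x, g x != -oo%E).

Definition lsc_fun (g : vec -> \bar R) : Prop :=
  forall x (c : R), (c%:E < g x)%E -> exists2 d : R, 0 < d &
    forall y, enorm (y - x) < d -> (c%:E < g y)%E.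

Definition frechet_subdiff (g : vec -> \bar R) (x v : vec) : Prop :=
  g x \is a fin_num /\
  forall eps : R, 0 < eps -> exists2 d : R, 0 < d &
    forall y, enorm (y - x) < d ->
      (g x + (dotv v (y - x) - eps * enorm (y - x))%:E <= g y)%E.

Definition lim_subdiff (g : vec -> \bar R) (x v : vec) : Prop :=
  g x \is a fin_num /\
  exists (xs vs : nat -> vec),
    [/\ cvg_vec xs x, cvg_vec vs v,
        (forall eps : R, 0 < eps -> exists N : nat, forall k, (N <= k)%N ->
            (`|g (xs k) - g x| < eps%:E)%E)
      & forall k, frechet_subdiff g (xs k) (vs k)].

Definition prox_bounded_at (g : vec -> \bar R) (nu : R) : Prop :=
  exists (x : vec) (M : R), forall y,
    (M%:E <= g y + ((2 * nu)^-1 * enorm (y - x) ^+ 2)%:E)%E.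
Definition prox_bounded (g : vec -> \bar R) : Prop :=
  exists2 nu : R, 0 < nu & prox_bounded_at g nu.
Definition prox_threshold (g : vec -> \bar R) : \bar R :=
  ereal_sup [set nu%:E | nu in [set nu : R | 0 < nu /\ prox_bounded_at g nu]].

Definition phi (f : vec -> R) (grad : vec -> vec) (B : vec -> 'M[R]_n) (x s : vec) : R :=
  f x + dotv (grad x) s + 2^-1 * dotv s (B x *m s).
Definition mmodel f grad B (psi : vec -> vec -> \bar R) (x : vec) (sigma : R) (s : vec)
  : \bar R :=
  ((phi f grad B x s + 2^-1 * sigma * enorm s ^+ 2)%:E + psi x s)%E.
Definition phi_cp (f : vec -> R) (grad : vec -> vec) (x s : vec) : R :=
  f x + dotv (grad x) s.
(* m_cp(s; x, nuinv) with nuinv = ν^{-1} *)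
Definition mcp f grad (psi : vec -> vec -> \bar R) (x : vec) (nuinv : R) (s : vec)
  : \bar R :=
  ((phi_cp f grad x s + 2^-1 * nuinv * enorm s ^+ 2)%:E + psi x s)%E.

Definition is_argmin (F : vec -> \bar R) (s : vec) : Prop := forall t, (F s <= F t)%E.

(** extended division used for rho: a / b, with ±oo*0 = 0 and (±oo)/(±oo) = 0,
    finite / (±oo) = 0 *)
Definition ediv (a b : \bar R) : \bar R :=
  match b with
  | EFin r => (a * (r^-1)%:E)%E
  | _ => 0%E
  end.

Definition r2n_rho f grad (h : vec -> \bar R) B (psi : vec -> vec -> \bar R)
  (x s : nat -> vec) (k : nat) : \bar R :=
  ediv (((f (x k))%:E + h (x k)) - ((f (x k + s k)%R)%:E + h (x k + s k)%R))%E
       (((phi f grad B (x k) 0%R)%:E + psi (x k) 0%R)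
          - ((phi f grad B (x k) (s k))%:E + psi (x k) (s k)))%E.

Definition R2N_generated f grad (h : vec -> \bar R) (B : vec -> 'M[R]_n)
  (psi : vec -> vec -> \bar R)
  (theta1 theta2 eta1 eta2 gamma1 gamma2 gamma3 : R) (x0 : vec) (sigma0 : R)
  (x : nat -> vec) (sigma : nat -> R) (scp st s : nat -> vec) : Prop :=
  [/\ [/\ 0 < theta1, theta1 < 1 & 1 < theta2],
      [/\ 0 < eta1, eta1 <= eta2 & eta2 < 1],
      [/\ 0 < gamma3, gamma3 <= 1, 1 < gamma1 & gamma1 <= gamma2],
      [/\ (h x0 < +oo)%E, 0 < sigma0, x 0%N = x0 & sigma 0%N = sigma0] &
      forall k : nat,
        let nuk := theta1 / (opnorm (B (x k)) + sigma k) in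
        let rhok := r2n_rho f grad h B psi x s k in
        [/\ is_argmin (mcp f grad psi (x k) nuk^-1) (scp k),
            (mmodel f grad B psi (x k) (sigma k) (st k)
               <= mmodel f grad B psi (x k) (sigma k) (scp k))%E,
            s k = (if theta2 * enorm (scp k) < enorm (st k) then scp k else st k),
            x k.+1 = (if (eta1%:E <= rhok)%E then x k + s k else x k) &
            [/\ (eta2%:E <= rhok)%E ->
                   gamma3 * sigma k <= sigma k.+1 /\ sigma k.+1 <= sigma k,
                (eta1%:E <= rhok)%E -> (rhok < eta2%:E)%E ->
                   sigma k <= sigma k.+1 /\ sigma k.+1 <= gamma1 * sigma k
              & (rhok < eta1%:E)%E ->
                   gamma1 * sigma k <= sigma k.+1 /\ sigma k.+1 <= gamma2 * sigma k]]].

Definition card_succ f grad h B psi (eta1 : R) (x s : nat -> vec) (k : nat) : nat :=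
  (\sum_(i < k.+1) ((eta1%:E <= r2n_rho f grad h B psi x s i)%E : nat))%N.

End Defs.

(* Once the last successful iteration is past, x_k is frozen at some x* while sigma_k
   grows at least geometrically, so sigma_k eventually exceeds any threshold depending on
   B(x* ) and on the constant of (MA5).  For such a k, a nonzero Cauchy step s_cp makes the
   predicted decrease at least sigma_k |s_k|^2 / 2 + |s_cp|^2 / 2, which dominates the model
   error kappa (1 + |B_k|) |s_k|^2, so rho_k >= eta1 and iteration k would be successful.
   Hence s_cp = 0, i.e. 0 minimizes m_cp, and Fermat's rule puts -grad f(x* ) in the
   Fréchet, hence limiting, subdifferential of psi(.; x* ) at 0, which is dh(x* ) by (MA1). *)
From HB Require Import structures.
From mathcomp Require Import all_boot all_order all_algebra.
From mathcomp Require Import all_classical all_reals all_analysis.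
From mathcomp Require Import lra.
Import Order.TTheory GRing.Theory Num.Theory.
Local Open Scope ring_scope.
Set Implicit Arguments. Unset Strict Implicit.

Section Vectors.
Variables (R : realType) (n : nat).
Local Notation vec := 'cV[R]_n.

Lemma dotv0 (u : vec) : dotv u 0 = 0.
Proof. by rewrite /dotv big1 // => i _; rewrite mxE mulr0. Qed.

Lemma dot0v (u : vec) : dotv 0 u = 0.
Proof. by rewrite /dotv big1 // => i _; rewrite mxE mul0r. Qed.

Lemma dotNv (u v : vec) : dotv (- u) v = - dotv u v.
Proof. by rewrite /dotv -sumrN; apply: eq_bigr => i _; rewrite mxE mulNr. Qed.

Lemma dotvv_ge0 (u : vec) : 0 <= dotv u u.
Proof. by rewrite /dotv sumr_ge0 // => i _; rewrite -expr2 sqr_ge0. Qed.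

Lemma dotvv_eq0 (u : vec) : (dotv u u == 0) = (u == 0).
Proof.
apply/eqP/eqP => [uu0|->]; last exact: dotv0.
apply/matrixP => i j; rewrite (ord1 j) mxE.
have sq_ge0 (k : 'I_n) : true -> 0 <= u k ord0 * u k ord0.
  by move=> _; rewrite -expr2 sqr_ge0.
have /eqP := @psumr_eq0P _ _ _ _ sq_ge0 uu0 i isT.
by rewrite mulf_eq0 orbb => /eqP.
Qed.

Lemma enorm_ge0 (u : vec) : 0 <= enorm u.
Proof. exact: sqrtr_ge0. Qed.

Lemma enorm0 : enorm (0 : vec) = 0.
Proof. by rewrite /enorm dotv0 sqrtr0. Qed.

Lemma enorm_sqr (u : vec) : enorm u ^+ 2 = dotv u u.
Proof. by rewrite /enorm sqr_sqrtr // dotvv_ge0. Qed.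

Lemma enorm_sqr_gt0 (u : vec) : u != 0 -> 0 < enorm u ^+ 2.
Proof. by rewrite enorm_sqr lt_def dotvv_ge0 dotvv_eq0 andbT. Qed.

Lemma abs_coord_le_enorm (u : vec) i : `|u i ord0| <= enorm u.
Proof.
rewrite -sqrtr_sqr /enorm ler_sqrt ?dotvv_ge0 // /dotv (bigD1 i) //= -expr2.
by rewrite lerDl sumr_ge0 // => j _; rewrite -expr2 sqr_ge0.
Qed.

(* A crude bound on the norm of [M] that avoids the supremum defining [opnorm]. *)
Definition entry_abs_sum (M : 'M[R]_n) : R := \sum_i \sum_j `|M i j|.

Lemma quad_form_le (M : 'M[R]_n) (u : vec) :
  dotv u (M *m u) <= entry_abs_sum M * enorm u ^+ 2.
Proof.
rewrite /dotv /entry_abs_sum mulr_suml; apply: ler_sum => i _.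
rewrite mxE mulr_sumr mulr_suml; apply: ler_sum => j _.
apply: le_trans (ler_norm _) _.
rewrite !normrM expr2 mulrCA; apply: ler_wpM2l => //.
by apply: ler_pM; rewrite ?abs_coord_le_enorm.
Qed.

Lemma frechet_lim_subdiff (g : vec -> \bar R) (y v : vec) :
  frechet_subdiff g y v -> lim_subdiff g y v.
Proof.
move=> fr; split; first exact: fr.1.
exists (fun=> y), (fun=> v); split => //.
- by move=> e e0; exists 0%N => k _; rewrite subrr enorm0.
- by move=> e e0; exists 0%N => k _; rewrite subrr enorm0.
move=> e e0; exists 0%N => k _.
by case: (g y) fr.1 => // r _; rewrite -EFinB subrr /= normr0 lte_fin.
Qed.

End Vectors.

Lemma fin_of_abs_sub_le (R : realType) (r q b : R) (y : \bar R) :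
  (`|(r%:E + y) - q%:E| <= b%:E)%E -> exists p, y = p%:E.
Proof. by case: y => [p| |] //= _; exists p. Qed.

Lemma fin_of_add_le (R : realType) (r q : R) (y : \bar R) :
  y != -oo%E -> (r%:E + y <= q%:E)%E -> exists p, y = p%:E.
Proof. by case: y => [p| |] // _ _; exists p. Qed.

Lemma ratio_ge (R : realType) (A D q kap sig eta : R) :
  0 < D -> 0 <= q -> sig * q <= 2 * D -> D - A <= kap * q ->
  eta <= 1 -> 2 * kap <= sig * (1 - eta) -> eta <= A / D.
Proof.
move=> D0 q0 sqD err eta1 kap_small.
rewrite ler_pdivlMr //.
have : 2 * kap * q <= sig * (1 - eta) * q by rewrite ler_wpM2r.
have : (1 - eta) * (sig * q) <= (1 - eta) * (2 * D) by rewrite ler_wpM2l ?subr_ge0.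
lra.
Qed.

Section ModelStep.
Variables (R : realType) (n : nat).
Local Notation vec := 'cV[R]_n.
Variables (f : vec -> R) (grad : vec -> vec) (B : vec -> 'M[R]_n).
Variables (psi : vec -> vec -> \bar R) (y : vec) (H : R).
Hypotheses (psi_y0 : psi y 0 = H%:E) (psi_y_proper : forall t, psi y t != -oo%E).

Local Notation phi := (phi f grad B y).
Local Notation mcp := (mcp f grad psi y).
Local Notation mmodel := (mmodel f grad B psi y).

Lemma phi0 : phi 0 = f y.
Proof. by rewrite /phi dotv0 dot0v mulr0 !addr0. Qed.

Lemma mcp0 c : mcp c 0 = (f y + H)%:E.
Proof. by rewrite /mcp psi_y0 /phi_cp dotv0 enorm0 expr0n /= mulr0 !addr0. Qed.

Lemma mcp_argmin_fin c a : is_argmin (mcp c) a -> exists p, psi y a = p%:E.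
Proof. by move=> /(_ 0); rewrite mcp0 /mcp; apply: fin_of_add_le. Qed.

Lemma mcp_argmin_decrease c a p : is_argmin (mcp c) a -> psi y a = p%:E ->
  2^-1 * c * enorm a ^+ 2 <= H - dotv (grad y) a - p.
Proof.
by move=> /(_ 0) + pa; rewrite mcp0 /mcp pa -!EFinD lee_fin /phi_cp; lra.
Qed.

Lemma mmodel_le_argmin_fin c sig a t : is_argmin (mcp c) a ->
  (mmodel sig t <= mmodel sig a)%E -> exists p, psi y t = p%:E.
Proof.
move=> /mcp_argmin_fin[p pa]; rewrite {2}/mmodel pa -EFinD.
exact: fin_of_add_le.
Qed.

Lemma mcp_argmin0_frechet c : is_argmin (mcp c) 0 -> frechet_subdiff (psi y) 0 (- grad y).
Proof.
move=> argmin0; split; first by rewrite psi_y0.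
move=> e e0; exists (2 * e / (`|c| + 1)) => [|z]; first by rewrite divr_gt0 ?mulr_gt0 ?ltr_wpDl.
rewrite subr0 => z_small; have := argmin0 z; rewrite mcp0 psi_y0 /mcp /phi_cp dotNv.
case: (psi y z) => [p| |] //=; last by move=> _; exact: leey.
rewrite -!EFinD !lee_fin => zmin.
have z0 := enorm_ge0 z.
have cz_small : c * enorm z <= 2 * e.
  apply: le_trans (_ : (`|c| + 1) * enorm z <= _); last first.
    by rewrite mulrC -ler_pdivlMr ?ltr_wpDl // ltW.
  by rewrite ler_wpM2r // ler_wpDr // ler_norm.
have : c * enorm z * enorm z <= 2 * e * enorm z by rewrite ler_wpM2r.
move: zmin; rewrite expr2; lra.
Qed.

Lemma pred_decrease_ge c sig C a t pa pt :
  is_argmin (mcp c) a -> (mmodel sig t <= mmodel sig a)%E ->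
  psi y a = pa%:E -> psi y t = pt%:E ->
  (forall u, dotv u (B y *m u) <= C * enorm u ^+ 2) -> 1 <= c - C - sig ->
  sig / 2 * enorm t ^+ 2 + enorm a ^+ 2 / 2 <= phi 0 + H - (phi t + pt).
Proof.
move=> argmin_a + pa_eq pt_eq quad_le c_large.
rewrite /mmodel pa_eq pt_eq -!EFinD lee_fin phi0 {2}/phi => model_le.
have := mcp_argmin_decrease argmin_a pa_eq; have := quad_le a.
have : enorm a ^+ 2 <= (c - C - sig) * enorm a ^+ 2.
  by rewrite ler_peMl ?sqr_ge0.
lra.
Qed.

Lemma step_ratio_ge (h : vec -> \bar R) c sig C kap eta a t :
  h y = H%:E -> is_argmin (mcp c) a -> a != 0 ->
  (mmodel sig t <= mmodel sig a)%E ->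
  (forall u, dotv u (B y *m u) <= C * enorm u ^+ 2) -> 1 <= c - C - sig ->
  (`|((f (y + t)%R)%:E + h (y + t)%R) - ((phi t)%:E + psi y t)|
     <= (kap * enorm t ^+ 2)%:E)%E ->
  0 <= sig -> eta <= 1 -> 2 * kap <= sig * (1 - eta) ->
  (eta%:E <= ediv (((f y)%:E + h y) - ((f (y + t)%R)%:E + h (y + t)%R))%E
                  (((phi 0)%:E + psi y 0) - ((phi t)%:E + psi y t))%E)%E.
Proof.
move=> hy argmin_a a_neq0 model_le quad_le c_large + sig0 eta1 kap_small.
have [pa pa_eq] := mcp_argmin_fin argmin_a.
have [pt pt_eq] := mmodel_le_argmin_fin argmin_a model_le.
rewrite pt_eq => model_err; have [hb hb_eq] := fin_of_abs_sub_le model_err.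
move: model_err; rewrite hb_eq hy psi_y0 -!EFinD lee_fin /ediv -EFinM lee_fin.
rewrite ler_norml => /andP[_ model_err].
have decrease := pred_decrease_ge argmin_a model_le pa_eq pt_eq quad_le c_large.
have t0 : 0 <= enorm t ^+ 2 by rewrite sqr_ge0.
have sigt0 : 0 <= sig * enorm t ^+ 2 by rewrite mulr_ge0.
have a_pos := enorm_sqr_gt0 a_neq0.
rewrite phi0 in decrease *.
apply: (ratio_ge (q := enorm t ^+ 2) (kap := kap) (sig := sig)); lra.
Qed.

End ModelStep.

Section R2NIterates.
Variables (R : realType) (n : nat).
Local Notation vec := 'cV[R]_n.
Variables (f : vec -> R) (grad : vec -> vec) (h : vec -> \bar R) (B : vec -> 'M[R]_n).
Variables (psi : vec -> vec -> \bar R).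
Variables (theta1 theta2 eta1 eta2 gamma1 gamma2 gamma3 : R) (x0 : vec) (sigma0 : R).
Variables (x : nat -> vec) (sigma : nat -> R) (scp st s : nat -> vec).
Hypothesis gen : R2N_generated f grad h B psi theta1 theta2 eta1 eta2 gamma1 gamma2 gamma3
  x0 sigma0 x sigma scp st s.

Local Notation successful k := (eta1%:E <= r2n_rho f grad h B psi x s k)%E.

Lemma r2n_cauchy_argmin k :
  is_argmin (mcp f grad psi (x k) (theta1 / (opnorm (B (x k)) + sigma k))^-1) (scp k).
Proof. by case: gen => _ _ _ _ /(_ k) []. Qed.

Lemma r2n_step_model_le k :
  (mmodel f grad B psi (x k) (sigma k) (s k) <= mmodel f grad B psi (x k) (sigma k) (scp k))%E.
Proof. by case: gen => _ _ _ _ /(_ k) [_ model_le -> _ _]; case: ifP. Qed.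

Lemma r2n_next_iterate k : x k.+1 = if successful k then x k + s k else x k.
Proof. by case: gen => _ _ _ _ /(_ k) []. Qed.

Lemma r2n_sigma_gt0 k : 0 < sigma k.
Proof.
case: gen => _ _ [g3_gt0 _ g1_gt1 _] [_ sigma0_gt0 _ sigma_0] iter.
elim: k => [|k IHk]; first by rewrite sigma_0.
case: (iter k) => _ _ _ _ [very_succ succ unsucc].
have [rho_lt1|rho_ge1] := ltP (r2n_rho f grad h B psi x s k) eta1%:E.
  by have [+ _] := unsucc rho_lt1; apply: lt_le_trans; rewrite mulr_gt0 // (lt_trans ltr01).
have [rho_lt2|rho_ge2] := ltP (r2n_rho f grad h B psi x s k) eta2%:E.
  by have [+ _] := succ rho_ge1 rho_lt2; apply: lt_le_trans.
by have [+ _] := very_succ rho_ge2; apply: lt_le_trans; rewrite mulr_gt0.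
Qed.

Lemma r2n_sigma_unsuccessful k : ~ successful k -> gamma1 * sigma k <= sigma k.+1.
Proof.
move/negP; rewrite -ltNge => rho_lt.
by case: gen => _ _ _ _ /(_ k) [_ _ _ _ [_ _ /(_ rho_lt) []]].
Qed.

Hypotheses (h_proper : proper_fun h) (psi_at0 : forall y, psi y 0 = h y).
Hypothesis psi_proper : forall y t, psi y t != -oo%E.
Variable kappa : R.
Hypothesis model_error : forall k,
  (`|((f (x k + s k)%R)%:E + h (x k + s k)%R)
      - ((phi f grad B (x k) (s k))%:E + psi (x k) (s k))|
     <= (kappa * (1 + opnorm (B (x k))) * enorm (s k) ^+ 2)%:E)%E.

Lemma r2n_h_fin k : exists H, h (x k) = H%:E.
Proof.
elim: k => [|k [H hxk]].
  case: gen => _ _ _ [hx0 _ -> _] _.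
  by move: hx0 (h_proper.2 x0); case: (h x0) => [H| |] // _ _; exists H.
rewrite r2n_next_iterate; case: ifP => _; last by exists H.
have psi_xk0 : psi (x k) 0 = H%:E by rewrite psi_at0.
have [p psi_s] := mmodel_le_argmin_fin psi_xk0 (psi_proper (x k))
  (r2n_cauchy_argmin k) (r2n_step_model_le k).
by move: (model_error k); rewrite psi_s -EFinD; apply: fin_of_abs_sub_le.
Qed.

Lemma r2n_frechet_of_cauchy0 k :
  scp k = 0 -> frechet_subdiff (psi (x k)) 0 (- grad (x k)).
Proof.
move=> scp0; have [H hxk] := r2n_h_fin k.
have psi_xk0 : psi (x k) 0 = H%:E by rewrite psi_at0.
by apply: (mcp_argmin0_frechet psi_xk0); rewrite -scp0; apply: r2n_cauchy_argmin.
Qed.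

Definition sigma_threshold (M : 'M[R]_n) : R :=
  Num.max ((theta1 * (1 + entry_abs_sum M) - opnorm M) / (1 - theta1))
          (2 * kappa * (1 + opnorm M) / (1 - eta1)).

Lemma r2n_successful_of_large_sigma k :
  scp k != 0 -> sigma_threshold (B (x k)) <= sigma k -> successful k.
Proof.
case: gen => [[th1_gt0 th1_lt1 _] [eta1_gt0 eta12 eta2_lt1] _ _ _] scp_neq0.
have [H hxk] := r2n_h_fin k; have sigma_gt0 := r2n_sigma_gt0 k.
rewrite ge_max !ler_pdivrMr ?subr_gt0 ?(le_lt_trans eta12) // => /andP[large1 large2].
have psi_xk0 : psi (x k) 0 = H%:E by rewrite psi_at0.
apply: (step_ratio_ge psi_xk0 (psi_proper (x k)) hxk (r2n_cauchy_argmin k) scp_neq0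
  (r2n_step_model_le k) (quad_form_le (B (x k))) _ (model_error k)); last 3 first.
- exact: ltW.
- by rewrite ltW // (le_lt_trans eta12).
- lra.
rewrite invf_div.
suff : 1 + entry_abs_sum (B (x k)) + sigma k <= (opnorm (B (x k)) + sigma k) / theta1 by lra.
rewrite ler_pdivlMr //; lra.
Qed.

Variable K : nat.
Hypothesis tail_unsuccessful : forall k, (K <= k)%N -> ~ successful k.

Lemma r2n_tail_const k : (K <= k)%N -> x k = x K.
Proof.
move=> /subnKC <-; elim: (k - K)%N => [|m IHm]; first by rewrite addn0.
rewrite addnS r2n_next_iterate; case: ifP => [succ|_]; last exact: IHm.
by case: (tail_unsuccessful (leq_addr m K) succ).
Qed.

Lemma r2n_sigma_tail_unbounded T : exists2 k, (K <= k)%N & T <= sigma k.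
Proof.
case: gen => _ _ [_ _ g1_gt1 _] _ _.
have sigmaK_gt0 := r2n_sigma_gt0 K.
set d := (gamma1 - 1) * sigma K.
have d_gt0 : 0 < d by rewrite mulr_gt0 ?subr_gt0.
have grow m : sigma K + m%:R * d <= sigma (K + m)%N.
  elim: m => [|m IHm]; first by rewrite addn0 mul0r addr0.
  have := r2n_sigma_unsuccessful (tail_unsuccessful (leq_addr m K)).
  have md_ge0 : 0 <= m%:R * d by rewrite mulr_ge0 // ltW.
  have : d <= (gamma1 - 1) * sigma (K + m)%N.
    by apply: ler_wpM2l; [rewrite subr_ge0 ltW | lra].
  rewrite addnS -[m.+1]addn1 natrD; lra.
have := archi_boundP (divr_ge0 (normr_ge0 T) (ltW d_gt0)).
rewrite ltr_pdivrMr // => T_lt.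
exists (K + Num.Def.archi_bound (`|T| / d))%N; first exact: leq_addr.
by have := grow (Num.Def.archi_bound (`|T| / d)); have := ler_norm T; lra.
Qed.

End R2NIterates.

Unset Implicit Arguments.

Theorem theorem6p3 (R : realType) (n : nat)
  (f : 'cV[R]_n -> R) (grad : 'cV[R]_n -> 'cV[R]_n) (h : 'cV[R]_n -> \bar R)
  (B : 'cV[R]_n -> 'M[R]_n) (psi : 'cV[R]_n -> 'cV[R]_n -> \bar R)
  (theta1 theta2 eta1 eta2 gamma1 gamma2 gamma3 : R) (x0 : 'cV[R]_n) (sigma0 : R)
  (x : nat -> 'cV[R]_n) (sigma : nat -> R) (scp st s : nat -> 'cV[R]_n) :
  C1_with_gradient f grad ->
  proper_fun h -> lsc_fun h ->
  (forall y, (B y)^T = B y) ->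
  (forall y, [/\ proper_fun (psi y), lsc_fun (psi y), prox_bounded (psi y),
                 psi y 0 = h y &
                 forall v, lim_subdiff (psi y) 0 v <-> lim_subdiff h y v]) ->
  (exists lam : \bar R, (0 < lam)%E /\ forall y, (lam <= prox_threshold (psi y))%E) ->
  R2N_generated f grad h B psi theta1 theta2 eta1 eta2 gamma1 gamma2 gamma3 x0 sigma0
    x sigma scp st s ->
  (exists2 kappa : R, 0 < kappa & forall k,
     (`| ((f (x k + s k)%R)%:E + h (x k + s k)%R)
         - ((phi f grad B (x k) (s k))%:E + psi (x k) (s k)) |
       <= (kappa * (1 + opnorm (B (x k))) * enorm (s k) ^+ 2)%:E)%E) ->
  (exists mu p : R, [/\ 0 < mu, 0 <= p, p <= 1 &
     forall k, opnorm (B (x k))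
               <= mu * (1 + (card_succ f grad h B psi eta1 x s k)%:R `^ p)]) ->
  (exists K : nat, forall k, (K <= k)%N ->
     ~ (eta1%:E <= r2n_rho f grad h B psi x s k)%E) ->
  exists xstar : 'cV[R]_n,
    (exists K : nat, forall k, (K <= k)%N -> x k = xstar) /\
    (exists v : 'cV[R]_n, lim_subdiff h xstar v /\ grad xstar + v = 0).
Proof.
(* Past the last successful iteration B_k = B(x^* ) is constant. *)
move=> _ h_proper _ _ MA1 _ gen [kappa _ model_error] _ [K tail_unsucc].
have psi_at0 y : psi y 0 = h y by case: (MA1 y).
have psi_proper y t : psi y t != -oo%E by case: (MA1 y) => [[_ +]].
have x_tail := r2n_tail_const gen tail_unsucc.
exists (x K); split; first by exists K.
have [k Kk large] := r2n_sigma_tail_unbounded gen tail_unsucc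
  (sigma_threshold theta1 eta1 kappa (B (x K))).
rewrite -(x_tail k Kk) in large *.
have [scp0|scp_neq0] := eqVneq (scp k) 0.
  exists (- grad (x k)); split; last by rewrite subrr.
  case: (MA1 (x k)) => _ _ _ _ <-; apply: frechet_lim_subdiff.
  exact: (r2n_frechet_of_cauchy0 gen h_proper psi_at0 psi_proper model_error scp0).
case: (tail_unsucc k Kk).
exact: (r2n_successful_of_large_sigma gen h_proper psi_at0 psi_proper model_error scp_neq0).
Qed.
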